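(* Let $\lambda \geq 0$ and $0\leq\beta<1$. Let $f(z)=z+\sum_{k=2}^{\infty}a_kz^k$ belong to $\Theta_{\Sigma}(1,\lambda,0,0;\beta)$ (the case $\tau=1$, $\gamma=\delta=0$). Then $$|a_2| \leq \min\left\{\frac{2(1-\beta)}{1+\lambda},\ \sqrt{\frac{2(1-\beta)}{1+2\lambda}}\right\}\quad\text{and}\quad |a_3| \leq \frac{2(1-\beta)}{1+2\lambda}.$$
   Context: Let $\mathbb{U}=\{z\in\mathbb{C}:|z|<1\}$. $\Sigma$ denotes the class of bi-univalent functions: functions $f(z)=z+\sum_{k=2}^\infty a_kz^k$ analytic and univalent in $\mathbb{U}$ whose inverse $f^{-1}$ extends to a univalent function $g$ on $\mathbb{U}$; this $g$ has the expansion $g(w)=w-a_2w^2+(2a_2^2-a_3)w^3-\cdots$. For $\delta\in\mathbb{N}_0$ and $h(z)=z+\sum_{k\ge2}c_kz^k$ analytic in $\mathbb{U}$, the Ruscheweyh derivative is $\mathcal{R}^\delta h(z)=z+\sum_{k=2}^{\infty}\frac{\Gamma(\delta+k)}{\Gamma(k)\Gamma(\delta+1)}c_kz^k$ (for $\delta=0$ it is the identity). For such $h$ and parameters $\lambda,\gamma,\tau\neq0,\delta$, put $$J_h(z)=1+\frac{1}{\tau}\Big[(1-\lambda)(1-\gamma)\frac{\mathcal{R}^\delta h(z)}{z}+(\lambda(\gamma+1)+\gamma)(\mathcal{R}^\delta h)'(z)+\lambda\gamma\big(z(\mathcal{R}^\delta h)''(z)-2\big)-1\Big].$$ For $0\le\beta<1$,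 $\Theta_{\Sigma}(\tau,\lambda,\gamma,\delta;\beta)$ is the set of $f\in\Sigma$ such that $\operatorname{Re}J_f(z)>\beta$ for all $z\in\mathbb{U}$ and $\operatorname{Re}J_g(w)>\beta$ for all $w\in\mathbb{U}$, where $g$ is the extension of $f^{-1}$ to $\mathbb{U}$. *)

From Stdlib Require Import Reals Factorial.
From Coquelicot Require Import Coquelicot.
Open Scope R_scope.

Definition analytic_U (h : C -> C) (c : nat -> C) : Prop :=
  forall z : C, Cmod z < 1 -> is_pseries c z (h z).

Definition univalent_U (h : C -> C) : Prop :=
  forall z w : C, Cmod z < 1 -> Cmod w < 1 -> h z = h w -> z = w.

(* The class Sigma of bi-univalent functions, with Taylor coefficients a:
   f(z) = z + sum_{k>=2} a_k z^k analytic and univalent in U, and f^{-1}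
   (defined on f(U)) extends to a univalent analytic g on U. *)
Definition in_Sigma_with (f g : C -> C) (a : nat -> C) : Prop :=
  analytic_U f a /\ a 0%nat = 0%C /\ a 1%nat = 1%C /\ univalent_U f /\
  (exists b : nat -> C, analytic_U g b) /\ univalent_U g /\
  (forall z : C, Cmod z < 1 -> Cmod (f z) < 1 -> g (f z) = z).

(* Coefficients of the Ruscheweyh derivative R^delta h, h(z)=z+sum c_k z^k:
   Gamma(delta+k)/(Gamma(k) Gamma(delta+1)) = (delta+k-1)!/((k-1)! delta!). *)
Definition rusch_coef (delta : nat) (c : nat -> C) (k : nat) : C :=
  match k with
  | O => 0%C
  | S O => 1%C
  | S k' => (RtoC (INR (fact (delta + k')) / (INR (fact k') * INR (fact delta)))
             * c k)%C
  end.

(* R^delta h(z)/z, with its removable singularity at 0 filled by its limit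
   (R^delta h)'(0). *)
Definition quot_z (H H1 : C -> C) (z : C) : C :=
  if Ceq_dec z 0%C then H1 0%C else (H z / z)%C.

(* J_h(z), given H = R^delta h, H1 = (R^delta h)', H2 = (R^delta h)''. *)
Definition J_val (tau : C) (lam gam : R) (H H1 H2 : C -> C) (z : C) : C :=
  (1 + / tau * (RtoC ((1 - lam) * (1 - gam)) * quot_z H H1 z
               + RtoC (lam * (gam + 1) + gam) * H1 z
               + RtoC (lam * gam) * (z * H2 z - 2) - 1))%C.

Definition J_cond (tau : C) (lam gam : R) (delta : nat) (beta : R)
  (h : C -> C) : Prop :=
  exists (c : nat -> C) (H H1 H2 : C -> C),
    analytic_U h c /\
    analytic_U H (rusch_coef delta c) /\
    (forall z, Cmod z < 1 -> is_derive H z (H1 z)) /\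
    (forall z, Cmod z < 1 -> is_derive H1 z (H2 z)) /\
    (forall z, Cmod z < 1 -> Re (J_val tau lam gam H H1 H2 z) > beta).

Definition in_Theta (tau : C) (lam gam : R) (delta : nat) (beta : R)
  (f : C -> C) (a : nat -> C) : Prop :=
  exists g : C -> C, in_Sigma_with f g a /\
    J_cond tau lam gam delta beta f /\ J_cond tau lam gam delta beta g.

From Stdlib Require Import Reals Factorial Lra Lia.
From Coquelicot Require Import Coquelicot.
Open Scope R_scope.

(* For tau = 1 and gamma = delta = 0, J_h(z) = (1 - lam) h(z)/z + lam h'(z)
   = sum_m (1 + lam m) c_(m+1) z^m has constant term 1 and real part > beta on the disk,
   so Caratheodory's inequality |p_k| <= 2 (Re p_0 - beta) gives
   (1 + lam k) |c_(k+1)| <= 2 (1 - beta).  For h = f this bounds |a_2| and |a_3|; for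
   h = g = f^-1, whose coefficients are -a_2 and 2 a_2^2 - a_3 (compare both sides of
   g (f t) = t up to t^3), it bounds |2 a_2^2 - a_3|, and |2 a_2^2| <= |a_3| + |2 a_2^2 - a_3|
   gives the square-root bound.  Caratheodory's inequality is proved on the circles
   |z| = r < 1 by averaging Re p over the N-th roots of unity w^j with the nonnegative weights
   1 + Re (c w^(-k j)), then letting N -> oo and r -> 1. *)

(** * Complex series *)

Lemma sum_n_Re (a : nat -> C) (n : nat) :
  sum_n (fun k => Re (a k)) n = Re (sum_n a n).
Proof. induction n as [|n IH]; [now rewrite !sum_O | now rewrite !sum_Sn, IH]. Qed.

Lemma is_series_Re (a : nat -> C) (l : C) :
  is_series a l -> is_series (fun n => Re (a n)) (Re l).
Proof.
  intros Hl. apply (filterlim_ext (fun n => Re (sum_n a n))).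
  - intros n. symmetry. apply sum_n_Re.
  - eapply filterlim_comp; [exact Hl|].
    intros P [eps HP]. exists eps. intros y [Hy _]. now apply HP.
Qed.

Lemma norm_series_le {K : AbsRing} {V : NormedModule K} (a : nat -> V) (b : nat -> R)
  (l : V) (s : R) :
  is_series a l -> is_series b s -> (forall n, norm (a n) <= b n) -> norm l <= s.
Proof.
  intros Ha Hb Hab.
  apply (is_lim_seq_le (fun n => norm (sum_n a n)) (sum_n b) (norm l) s).
  - intros n. eapply Rle_trans; [apply (norm_sum_n_m a 0 n)|].
    now apply sum_n_m_le.
  - eapply filterlim_comp; [exact Ha | apply filterlim_norm].
  - exact Hb.
Qed.

Lemma is_series_sum_n {K : AbsRing} {V : NormedModule K} (F : nat -> nat -> V)
  (s : nat -> V) (n : nat) :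
  (forall j, (j <= n)%nat -> is_series (F j) (s j)) ->
  is_series (fun m => sum_n (fun j => F j m) n) (sum_n s n).
Proof.
  induction n as [|n IH]; intros H.
  - rewrite sum_O. eapply is_series_ext; [|apply H; lia]. intros m. now rewrite sum_O.
  - rewrite sum_Sn.
    apply (is_series_ext (fun m => plus (sum_n (fun j => F j m) n) (F (S n) m))).
    + intros m. now rewrite sum_Sn.
    + apply is_series_plus; [apply IH; intros j Hj|]; apply H; lia.
Qed.

Lemma Series_tail_le (b : nat -> R) (eps : R) : ex_series b -> 0 < eps ->
  exists n0, forall n, (n0 <= n)%nat -> Series (fun m => b (n + m)%nat) <= eps.
Proof.
  intros Hb Heps.
  assert (L : is_lim_seq (sum_n b) (Series b)) by (apply Series_correct; exact Hb).
  apply is_lim_seq_spec in L. destruct (L (mkposreal eps Heps)) as [n0 Hn0].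
  exists (S n0). intros n Hn. simpl in Hn0.
  assert (E := Series_incr_n b n ltac:(lia) Hb).
  specialize (Hn0 (pred n) ltac:(lia)). rewrite sum_n_Reals in Hn0.
  apply Rabs_lt_between in Hn0. lra.
Qed.

Lemma is_series_bounded (a : nat -> C) (l : C) :
  is_series a l -> exists M, forall n, Cmod (a n) <= M.
Proof.
  intros H. destruct (filterlim_bounded (sum_n a)) as [M HM]; [now exists l|].
  exists (2 * M). intros [|n].
  - specialize (HM 0%nat). rewrite sum_O in HM. pose proof (Cmod_ge_0 (a 0%nat)).
    change (Cmod (a 0%nat) <= M) in HM. lra.
  - replace (a (S n)) with (sum_n a (S n) - sum_n a n)%C
      by (rewrite sum_Sn; change plus with Cplus; ring).
    eapply Rle_trans; [apply Cmod_triangle|]. rewrite Cmod_opp.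
    pose proof (HM (S n)). pose proof (HM n). change norm with Cmod in *. lra.
Qed.

(** * Taylor remainders of analytic functions *)

Lemma pow_n_Cpow (z : C) (n : nat) : pow_n z n = (z ^ n)%C.
Proof. induction n as [|n IH]; [reflexivity | cbn; now rewrite IH]. Qed.

Lemma analytic_is_series (h : C -> C) (e : nat -> C) (z : C) :
  analytic_U h e -> Cmod z < 1 -> is_series (fun n => z ^ n * e n)%C (h z).
Proof.
  intros Ha Hz. eapply is_series_ext; [|exact (Ha z Hz)].
  intros n. now rewrite pow_n_Cpow.
Qed.

Lemma analytic_coef_bound (h : C -> C) (e : nat -> C) : analytic_U h e ->
  exists M, 0 <= M /\ forall n, Cmod (e n) <= M * (4/3) ^ n.
Proof.
  intros Ha.
  assert (H34 : Cmod (RtoC (3/4)) < 1) by (rewrite Cmod_R, Rabs_pos_eq; lra).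
  destruct (is_series_bounded _ _ (analytic_is_series _ _ _ Ha H34)) as [M HM].
  exists M. split; [eapply Rle_trans; [apply Cmod_ge_0 | apply (HM 0%nat)]|].
  intros n. specialize (HM n).
  rewrite Cmod_mult, Cmod_pow, Cmod_R, Rabs_pos_eq in HM by lra.
  assert (Hinv : (4/3) ^ n * (3/4) ^ n = 1)
    by (rewrite <- Rpow_mult_distr, <- (pow1 n); f_equal; field).
  assert (0 < (4/3) ^ n) by (apply pow_lt; lra).
  replace (Cmod (e n)) with ((4/3) ^ n * ((3/4) ^ n * Cmod (e n)))
    by (rewrite <- Rmult_assoc, Hinv; ring).
  rewrite (Rmult_comm M). apply Rmult_le_compat_l; lra.
Qed.

Definition taylor3 (e : nat -> C) (z : C) : C :=
  (e 0%nat + e 1%nat * z + e 2%nat * z ^ 2 + e 3%nat * z ^ 3)%C.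

(* The tail beyond z^3 is dominated by |z|^4 M (4/3)^4 (2/3)^m once |z| <= 1/2. *)
Lemma analytic_taylor3_remainder (h : C -> C) (e : nat -> C) : analytic_U h e ->
  exists K, 0 <= K /\
    forall z, Cmod z <= 1/2 -> Cmod (h z - taylor3 e z) <= K * Cmod z ^ 4.
Proof.
  intros Ha. destruct (analytic_coef_bound _ _ Ha) as [M [HM0 HM]].
  set (K := M * (4/3) ^ 4).
  exists (3 * K). split; [unfold K; apply Rmult_le_pos; [lra | apply Rmult_le_pos; lra]|].
  intros z Hz.
  assert (Hs : is_series (fun m => z ^ (4 + m) * e (4 + m)%nat)%C (h z - taylor3 e z)%C).
  { apply (is_series_incr_n (fun n => z ^ n * e n)%C); [lia|].
    replace (plus (h z - taylor3 e z)%C _) with (h z)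
      by (change (Init.Nat.pred 4) with 3%nat; rewrite !sum_Sn, sum_O;
          unfold taylor3; change plus with Cplus; cbn; ring).
    apply analytic_is_series; [exact Ha | lra]. }
  assert (Hb : is_series (fun m => Cmod z ^ 4 * K * (2/3) ^ m) (3 * K * Cmod z ^ 4)).
  { replace (3 * K * Cmod z ^ 4) with (Cmod z ^ 4 * K * / (1 - 2/3)) by field.
    apply (is_series_scal_l (V := R_NormedModule)), is_series_geom.
    rewrite Rabs_pos_eq; lra. }
  apply (norm_series_le (V := C_NormedModule) _ _ _ _ Hs Hb). intros m.
  rewrite Cmod_mult, Cmod_pow, pow_add.
  specialize (HM (4 + m)%nat). rewrite pow_add in HM.
  assert (Hzm : Cmod z ^ m <= (1/2) ^ m) by (apply pow_incr; split; [apply Cmod_ge_0 | lra]).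
  assert (Hgeom : (1/2) ^ m * (4/3) ^ m = (2/3) ^ m)
    by (rewrite <- Rpow_mult_distr; f_equal; field).
  assert (0 <= Cmod z ^ 4) by (apply pow_le, Cmod_ge_0).
  assert (0 <= Cmod z ^ m) by (apply pow_le, Cmod_ge_0).
  assert (0 <= Cmod (e (4 + m)%nat)) by apply Cmod_ge_0.
  assert (0 <= (4/3) ^ m) by (apply pow_le; lra).
  rewrite <- Hgeom. unfold K.
  replace (Cmod z ^ 4 * (M * (4/3) ^ 4) * ((1/2) ^ m * (4/3) ^ m))
    with (Cmod z ^ 4 * ((1/2) ^ m * (M * ((4/3) ^ 4 * (4/3) ^ m)))) by ring.
  rewrite Rmult_assoc. apply Rmult_le_compat_l; [assumption|].
  apply Rmult_le_compat; assumption.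
Qed.

(** * Asymptotics at [0+] and the coefficients of an inverse *)

Definition bigO0 (k : nat) (F : R -> C) : Prop :=
  exists K d, 0 < d /\ forall t, 0 < t < d -> Cmod (F t) <= K * t ^ k.

Lemma bigO0_ext_near (k : nat) (F G : R -> C) :
  (exists d, 0 < d /\ forall t, 0 < t < d -> F t = G t) -> bigO0 k F -> bigO0 k G.
Proof.
  intros [d0 [Hd0 E]] [K [d [Hd H]]]. exists K, (Rmin d d0).
  split; [now apply Rmin_pos|]. intros t Ht.
  pose proof (Rmin_l d d0). pose proof (Rmin_r d d0).
  rewrite <- E by lra. apply H. lra.
Qed.

Lemma bigO0_ext (k : nat) (F G : R -> C) :
  (forall t, F t = G t) -> bigO0 k F -> bigO0 k G.
Proof. intros E. apply bigO0_ext_near. exists 1. split; [lra | auto]. Qed.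

Lemma bigO0_add (k : nat) (F G : R -> C) :
  bigO0 k F -> bigO0 k G -> bigO0 k (fun t => F t + G t)%C.
Proof.
  intros [K1 [d1 [Hd1 H1]]] [K2 [d2 [Hd2 H2]]].
  exists (K1 + K2), (Rmin d1 d2). split; [now apply Rmin_pos|]. intros t Ht.
  pose proof (Rmin_l d1 d2). pose proof (Rmin_r d1 d2).
  eapply Rle_trans; [apply Cmod_triangle|]. rewrite Rmult_plus_distr_r.
  apply Rplus_le_compat; [apply H1 | apply H2]; lra.
Qed.

Lemma bigO0_scal (k : nat) (c : C) (F : R -> C) :
  bigO0 k F -> bigO0 k (fun t => c * F t)%C.
Proof.
  intros [K [d [Hd H]]]. exists (Cmod c * K), d. split; [exact Hd|]. intros t Ht.
  rewrite Cmod_mult, Rmult_assoc. apply Rmult_le_compat_l; [apply Cmod_ge_0 | auto].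
Qed.

Lemma bigO0_mul (i j : nat) (F G : R -> C) :
  bigO0 i F -> bigO0 j G -> bigO0 (i + j) (fun t => F t * G t)%C.
Proof.
  intros [K1 [d1 [Hd1 H1]]] [K2 [d2 [Hd2 H2]]].
  exists (K1 * K2), (Rmin d1 d2). split; [now apply Rmin_pos|]. intros t Ht.
  pose proof (Rmin_l d1 d2). pose proof (Rmin_r d1 d2).
  rewrite Cmod_mult, pow_add.
  replace (K1 * K2 * (t ^ i * t ^ j)) with ((K1 * t ^ i) * (K2 * t ^ j)) by ring.
  apply Rmult_le_compat; try apply Cmod_ge_0; [apply H1 | apply H2]; lra.
Qed.

Lemma bigO0_weaken (m k : nat) (F : R -> C) :
  (k <= m)%nat -> bigO0 m F -> bigO0 k F.
Proof.
  intros Hkm [K [d [Hd H]]]. exists (Rabs K), (Rmin d 1).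
  split; [apply Rmin_pos; lra|]. intros t Ht.
  pose proof (Rmin_l d 1). pose proof (Rmin_r d 1).
  eapply Rle_trans; [apply H; lra|].
  eapply Rle_trans; [apply Rmult_le_compat_r; [apply pow_le; lra | apply Rle_abs]|].
  apply Rmult_le_compat_l; [apply Rabs_pos|].
  replace m with (k + (m - k))%nat by lia. rewrite pow_add.
  assert (t ^ (m - k) <= 1) by (rewrite <- (pow1 (m - k)); apply pow_incr; lra).
  assert (0 <= t ^ k) by (apply pow_le; lra).
  assert (0 <= t ^ (m - k)) by (apply pow_le; lra). nra.
Qed.

Lemma bigO0_pow (k : nat) : bigO0 k (fun t => RtoC t ^ k)%C.
Proof.
  exists 1, 1. split; [lra|]. intros t Ht.
  rewrite Cmod_pow, Cmod_R, Rabs_pos_eq by lra. lra.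
Qed.

Lemma bigO0_const (c : C) : bigO0 0 (fun _ => c).
Proof. exists (Cmod c), 1. split; [lra|]. intros t _. simpl. lra. Qed.

Lemma bigO0_div_id (k : nat) (F : R -> C) :
  bigO0 (S k) (fun t => RtoC t * F t)%C -> bigO0 k F.
Proof.
  intros [K [d [Hd H]]]. exists K, d. split; [exact Hd|]. intros t Ht.
  specialize (H t Ht). rewrite Cmod_mult, Cmod_R, Rabs_pos_eq in H by lra.
  simpl in H. apply (Rmult_le_reg_l t); [lra|]. lra.
Qed.

Lemma bigO0_1_lt (F : R -> C) (eps : R) : bigO0 1 F -> 0 < eps ->
  exists d, 0 < d /\ forall t, 0 < t < d -> Cmod (F t) < eps.
Proof.
  intros [K [d [Hd H]]] Heps. pose proof (Rabs_pos K).
  exists (Rmin d (eps / (Rabs K + 1))).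
  split; [apply Rmin_pos; [lra | apply Rdiv_lt_0_compat; lra]|]. intros t Ht.
  pose proof (Rmin_l d (eps / (Rabs K + 1))). pose proof (Rmin_r d (eps / (Rabs K + 1))).
  assert (Ht' : (Rabs K + 1) * t < eps).
  { apply (Rmult_lt_reg_r (/ (Rabs K + 1))); [apply Rinv_0_lt_compat; lra|].
    replace ((Rabs K + 1) * t * / (Rabs K + 1)) with t by (field; lra). lra. }
  specialize (H t ltac:(lra)). simpl in H.
  pose proof (Rle_abs K). nra.
Qed.

Lemma bigO0_1_const (p : C) : bigO0 1 (fun _ => p) -> p = 0%C.
Proof.
  intros H. apply Cmod_eq_0, Rle_antisym; [|apply Cmod_ge_0].
  apply Rle_plus_epsilon. intros eps Heps.
  destruct (bigO0_1_lt _ _ H Heps) as [d [Hd Hp]].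
  specialize (Hp (d / 2) ltac:(lra)). lra.
Qed.

Lemma bigO0_horner_step (k : nat) (p : C) (G : R -> C) :
  bigO0 (S k) (fun t => p + RtoC t * G t)%C -> bigO0 0 G -> p = 0%C /\ bigO0 k G.
Proof.
  intros H HG.
  assert (HtG : bigO0 1 (fun t => RtoC t * G t)%C).
  { apply (bigO0_ext _ (fun t => RtoC t ^ 1 * G t)%C); [intros t; simpl; ring|].
    exact (bigO0_mul 1 0 _ _ (bigO0_pow 1) HG). }
  assert (Hp : p = 0%C).
  { apply bigO0_1_const.
    apply (bigO0_ext _ (fun t => (p + RtoC t * G t) + (-1) * (RtoC t * G t))%C);
      [intros t; ring|].
    apply bigO0_add; [apply (bigO0_weaken (S k)); [lia | exact H]|].
    now apply bigO0_scal. }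
  split; [exact Hp|]. subst p. apply bigO0_div_id.
  apply (bigO0_ext _ (fun t => 0 + RtoC t * G t)%C); [intros t; ring | exact H].
Qed.

Lemma bigO0_polynomial (p : C) (G : R -> C) :
  bigO0 0 G -> bigO0 0 (fun t => p + RtoC t * G t)%C.
Proof.
  intros HG. apply bigO0_add; [apply bigO0_const|].
  apply (bigO0_weaken 1); [lia|].
  apply (bigO0_ext _ (fun t => RtoC t ^ 1 * G t)%C); [intros t; simpl; ring|].
  exact (bigO0_mul 1 0 _ _ (bigO0_pow 1) HG).
Qed.

Lemma bigO0_cubic_eq0 (p0 p1 p2 p3 : C) :
  bigO0 4 (fun t => p0 + p1 * RtoC t + p2 * RtoC t ^ 2 + p3 * RtoC t ^ 3)%C ->
  p0 = 0%C /\ p1 = 0%C /\ p2 = 0%C /\ p3 = 0%C.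
Proof.
  intros H.
  assert (G3 : bigO0 0 (fun _ => p3)) by apply bigO0_const.
  assert (G2 := bigO0_polynomial p2 _ G3).
  assert (G1 := bigO0_polynomial p1 _ G2).
  apply (bigO0_ext _ _ (fun t => p0 + RtoC t * (p1 + RtoC t * (p2 + RtoC t * p3)))%C)
    in H; [|intros t; simpl; ring].
  destruct (bigO0_horner_step _ _ _ H G1) as [E0 H1].
  destruct (bigO0_horner_step _ _ _ H1 G2) as [E1 H2].
  destruct (bigO0_horner_step _ _ _ H2 G3) as [E2 H3].
  repeat split; auto. now apply bigO0_1_const.
Qed.

Lemma analytic_taylor3_remainder_comp (h : C -> C) (e : nat -> C) (F : R -> C) :
  analytic_U h e -> bigO0 1 F -> bigO0 4 (fun t => h (F t) - taylor3 e (F t))%C.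
Proof.
  intros Ha HF.
  destruct (analytic_taylor3_remainder _ _ Ha) as [K [HK0 HK]].
  destruct (bigO0_1_lt _ (1/2) HF ltac:(lra)) as [d0 [Hd0 Hsmall]].
  destruct HF as [K1 [d1 [Hd1 H1]]].
  exists (K * Rabs K1 ^ 4), (Rmin d0 d1). split; [now apply Rmin_pos|]. intros t Ht.
  pose proof (Rmin_l d0 d1). pose proof (Rmin_r d0 d1).
  eapply Rle_trans; [apply HK; left; apply Hsmall; lra|].
  rewrite Rmult_assoc, <- Rpow_mult_distr. apply Rmult_le_compat_l; [exact HK0|].
  apply pow_incr. split; [apply Cmod_ge_0|].
  eapply Rle_trans; [apply H1; lra|]. simpl. rewrite Rmult_1_r.
  apply Rmult_le_compat_r; [lra | apply Rle_abs].
Qed.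

Lemma analytic_taylor3_remainder_ray (h : C -> C) (e : nat -> C) :
  analytic_U h e -> bigO0 4 (fun t => h (RtoC t) - taylor3 e (RtoC t))%C.
Proof.
  intros Ha. apply analytic_taylor3_remainder_comp; [exact Ha|].
  apply (bigO0_ext _ (fun t => RtoC t ^ 1)%C); [intros t; simpl; ring | apply bigO0_pow].
Qed.

Lemma analytic_coef_unique (h : C -> C) (c c' : nat -> C) :
  analytic_U h c -> analytic_U h c' -> forall i, (i <= 3)%nat -> c i = c' i.
Proof.
  intros H H'.
  assert (Hdiff := bigO0_add _ _ _ (analytic_taylor3_remainder_ray _ _ H')
                     (bigO0_scal _ (-1)%C _ (analytic_taylor3_remainder_ray _ _ H))).
  destruct (bigO0_cubic_eq0 (c 0%nat - c' 0%nat) (c 1%nat - c' 1%nat)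
              (c 2%nat - c' 2%nat) (c 3%nat - c' 3%nat)) as [E0 [E1 [E2 E3]]].
  { revert Hdiff. apply bigO0_ext. intros t. unfold taylor3. ring. }
  intros i Hi. apply Ceq_minus. destruct i as [|[|[|[|i]]]]; easy || lia.
Qed.

Lemma bigO0_near_identity_powers (F : R -> C) (a2 a3 : C) :
  bigO0 4 (fun t => F t - (RtoC t + a2 * RtoC t ^ 2 + a3 * RtoC t ^ 3))%C ->
  bigO0 1 F /\
  bigO0 4 (fun t => F t ^ 2 - RtoC t ^ 2 - 2 * a2 * RtoC t ^ 3)%C /\
  bigO0 4 (fun t => F t ^ 3 - RtoC t ^ 3)%C.
Proof.
  intros HF.
  set (u := fun t => (F t - RtoC t - a2 * RtoC t ^ 2)%C).
  assert (Hu : bigO0 3 u).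
  { apply (bigO0_ext _ (fun t => a3 * RtoC t ^ 3 + (F t - (RtoC t + a2 * RtoC t ^ 2
                                                     + a3 * RtoC t ^ 3)))%C);
      [intros t; unfold u; ring|].
    apply bigO0_add; [apply bigO0_scal, bigO0_pow | apply (bigO0_weaken 4); [lia | exact HF]]. }
  assert (HD : bigO0 2 (fun t => F t - RtoC t)%C).
  { apply (bigO0_ext _ (fun t => a2 * RtoC t ^ 2 + u t)%C); [intros t; unfold u; ring|].
    apply bigO0_add; [apply bigO0_scal, bigO0_pow | apply (bigO0_weaken 3); [lia | exact Hu]]. }
  assert (H1 : bigO0 1 F).
  { apply (bigO0_ext _ (fun t => RtoC t ^ 1 + (F t - RtoC t))%C); [intros t; simpl; ring|].
    apply bigO0_add; [apply bigO0_pow | apply (bigO0_weaken 2); [lia | exact HD]]. }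
  repeat split; [exact H1| |].
  - apply (bigO0_ext _ (fun t => a2 * a2 * RtoC t ^ 4 + 2 * (RtoC t ^ 1 * u t)
                         + 2 * a2 * (RtoC t ^ 2 * u t) + u t * u t)%C);
      [intros t; unfold u; ring|].
    repeat apply bigO0_add.
    + apply bigO0_scal, bigO0_pow.
    + apply bigO0_scal. exact (bigO0_mul 1 3 _ _ (bigO0_pow 1) Hu).
    + apply bigO0_scal, (bigO0_weaken 5); [lia|]. exact (bigO0_mul 2 3 _ _ (bigO0_pow 2) Hu).
    + apply (bigO0_weaken 6); [lia|]. exact (bigO0_mul 3 3 _ _ Hu Hu).
  - apply (bigO0_ext _ (fun t => (F t - RtoC t) * (F t * F t + F t * RtoC t ^ 1
                                                   + RtoC t ^ 2))%C); [intros t; ring|].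
    apply (bigO0_mul 2 2); [exact HD|].
    repeat apply bigO0_add; [exact (bigO0_mul 1 1 _ _ H1 H1)
                            | exact (bigO0_mul 1 1 _ _ H1 (bigO0_pow 1)) | apply bigO0_pow].
Qed.

Lemma inverse_coef23 (f g : C -> C) (a b : nat -> C) :
  analytic_U f a -> a 0%nat = 0%C -> a 1%nat = 1%C -> analytic_U g b ->
  (forall z, Cmod z < 1 -> Cmod (f z) < 1 -> g (f z) = z) ->
  b 2%nat = (- a 2%nat)%C /\ b 3%nat = (2 * a 2%nat * a 2%nat - a 3%nat)%C.
Proof.
  intros Hf Ha0 Ha1 Hg Hinv.
  set (F := fun t => f (RtoC t)).
  assert (Rf : bigO0 4 (fun t => F t - (RtoC t + a 2%nat * RtoC t ^ 2
                                         + a 3%nat * RtoC t ^ 3))%C).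
  { eapply bigO0_ext; [|exact (analytic_taylor3_remainder_ray _ _ Hf)]. intros t.
    unfold F, taylor3. rewrite Ha0, Ha1. ring. }
  destruct (bigO0_near_identity_powers _ _ _ Rf) as [SF [S2 S3]].
  assert (Rg := analytic_taylor3_remainder_comp _ _ _ Hg SF).
  assert (Hgf : exists d, 0 < d /\ forall t, 0 < t < d -> g (F t) = RtoC t).
  { destruct (bigO0_1_lt _ 1 SF ltac:(lra)) as [d [Hd HFt]].
    exists (Rmin d 1). split; [apply Rmin_pos; lra|]. intros t Ht.
    pose proof (Rmin_l d 1). pose proof (Rmin_r d 1).
    apply Hinv; [rewrite Cmod_R, Rabs_pos_eq; lra | apply HFt; lra]. }
  destruct (bigO0_cubic_eq0 (b 0%nat) (b 1%nat - 1) (b 1%nat * a 2%nat + b 2%nat)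
     (b 1%nat * a 3%nat + 2 * b 2%nat * a 2%nat + b 3%nat)) as [_ [E1 [E2 E3]]].
  { apply (bigO0_ext_near _ (fun t => (-1) * (b 1%nat * (F t - (RtoC t + a 2%nat * RtoC t ^ 2
                                                     + a 3%nat * RtoC t ^ 3))
        + b 2%nat * (F t ^ 2 - RtoC t ^ 2 - 2 * a 2%nat * RtoC t ^ 3)
        + b 3%nat * (F t ^ 3 - RtoC t ^ 3) + (g (F t) - taylor3 b (F t))))%C).
    - destruct Hgf as [d [Hd Hgf]]. exists d. split; [exact Hd|]. intros t Ht.
      rewrite Hgf by exact Ht. unfold taylor3. ring.
    - apply bigO0_scal.
      apply bigO0_add; [|exact Rg].
      apply bigO0_add; [|now apply bigO0_scal].
      apply bigO0_add; now apply bigO0_scal. }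
  apply Ceq_minus in E1.
  assert (Hb2 : b 2%nat = (- a 2%nat)%C) by (apply Ceq_minus; rewrite <- E2, E1; ring).
  split; [exact Hb2|]. apply Ceq_minus. rewrite <- E3, E1, Hb2. ring.
Qed.

(** * Roots of unity *)

Definition cis (x : R) : C := (cos x, sin x).

Lemma cis_0 : cis 0 = 1%C.
Proof. unfold cis. now rewrite cos_0, sin_0. Qed.

Lemma cis_add (x y : R) : (cis x * cis y)%C = cis (x + y).
Proof. unfold cis, Cmult; simpl. rewrite cos_plus, sin_plus. f_equal; ring. Qed.

Lemma cis_2PI (x : R) : cis (x + 2 * PI) = cis x.
Proof. rewrite <- cis_add. unfold cis at 2. rewrite cos_2PI, sin_2PI. apply Cmult_1_r. Qed.

Lemma Cconj_cis (x : R) : Cconj (cis x) = cis (- x).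
Proof. unfold cis, Cconj; simpl. now rewrite cos_neg, sin_neg. Qed.

Lemma Cmod_cis (x : R) : Cmod (cis x) = 1.
Proof.
  unfold Cmod, cis; simpl. pose proof (sin2_cos2 x). unfold Rsqr in *.
  replace (cos x * (cos x * 1) + sin x * (sin x * 1)) with 1 by lra. apply sqrt_1.
Qed.

Lemma Cpow_cis (x : R) (n : nat) : (cis x ^ n)%C = cis (INR n * x).
Proof.
  induction n as [|n IH]; [now rewrite Rmult_0_l, cis_0|].
  rewrite Cpow_S, IH, cis_add, S_INR. f_equal. ring.
Qed.

Lemma cis_neq_1 (x : R) : 0 < x < 2 * PI -> cis x <> 1%C.
Proof.
  intros [H0 H2] E. injection E as Ecos _. pose proof PI_RGT_0.
  destruct (Rle_or_lt x PI).
  - assert (cos x < cos 0) by (apply cos_decreasing_1; lra). rewrite cos_0 in *. lra.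
  - assert (cos x < cos (2 * PI)) by (apply cos_increasing_1; lra).
    rewrite cos_2PI in *. lra.
Qed.

Definition root_unity (n : nat) : C := cis (2 * PI / INR (S n)).

Lemma root_unity_pow_S (n : nat) : (root_unity n ^ S n)%C = 1%C.
Proof.
  unfold root_unity. rewrite Cpow_cis, <- cis_0, <- (cis_2PI 0). f_equal.
  field. pose proof (pos_INR n). rewrite S_INR. lra.
Qed.

Lemma root_unity_pow_mod (n m : nat) :
  (root_unity n ^ m)%C = (root_unity n ^ (m mod S n))%C.
Proof.
  rewrite (Nat.div_mod_eq m (S n)) at 1.
  now rewrite Cpow_add_r, Cpow_mult_r, root_unity_pow_S, Cpow_1_l, Cmult_1_l.
Qed.

Lemma root_unity_pow_neq_1 (n m : nat) :
  (m mod S n <> 0)%nat -> (root_unity n ^ m)%C <> 1%C.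
Proof.
  intros Hm. rewrite root_unity_pow_mod. unfold root_unity. rewrite Cpow_cis.
  apply cis_neq_1. pose proof PI_RGT_0.
  assert (Hr : (m mod S n < S n)%nat) by (apply Nat.mod_upper_bound; lia).
  apply lt_INR in Hr. assert (0 < INR (m mod S n)) by (apply lt_0_INR; lia).
  assert (0 < INR (S n)) by apply lt_0_INR, Nat.lt_0_succ.
  split.
  - apply Rmult_lt_0_compat; [lra | apply Rdiv_lt_0_compat; lra].
  - apply (Rmult_lt_reg_r (INR (S n))); [lra|].
    replace (INR (m mod S n) * (2 * PI / INR (S n)) * INR (S n))
      with (2 * PI * INR (m mod S n)) by (field; lra). nra.
Qed.

Lemma Cconj_root_unity_pow (n L k : nat) :
  (L + k = S n)%nat -> Cconj (root_unity n ^ L)%C = (root_unity n ^ k)%C.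
Proof.
  intros HLk. unfold root_unity. rewrite !Cpow_cis, Cconj_cis, <- cis_2PI. f_equal.
  assert (0 < INR (S n)) by apply lt_0_INR, Nat.lt_0_succ.
  replace (INR k) with (INR (S n) - INR L) by (rewrite <- HLk, plus_INR; ring).
  field. lra.
Qed.

Lemma Cmod_root_unity_pow (n j : nat) : Cmod (root_unity n ^ j)%C = 1.
Proof. unfold root_unity. now rewrite Cpow_cis, Cmod_cis. Qed.

Lemma Cmult_geometric_sum (z : C) (n : nat) :
  ((1 - z) * sum_n (fun j => z ^ j) n)%C = (1 - z ^ S n)%C.
Proof.
  induction n as [|n IH].
  - rewrite sum_O. simpl. ring.
  - rewrite sum_Sn. change plus with Cplus.
    rewrite Cmult_plus_distr_l, IH, !Cpow_S. ring.
Qed.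

Definition root_sum (n m : nat) : C := sum_n (fun j => (root_unity n ^ m) ^ j)%C n.

Lemma root_sum_multiple (n m : nat) :
  (m mod S n = 0)%nat -> root_sum n m = RtoC (INR (S n)).
Proof.
  intros Hm. unfold root_sum. rewrite root_unity_pow_mod, Hm.
  change (root_unity n ^ 0)%C with (RtoC 1).
  rewrite (sum_n_ext _ (fun _ => RtoC 1)) by (intros; apply Cpow_1_l).
  clear Hm. induction n as [|n IH]; [now rewrite sum_O|].
  rewrite sum_Sn, IH, (S_INR (S n)), RtoC_plus. reflexivity.
Qed.

Lemma root_sum_nonmultiple (n m : nat) :
  (m mod S n <> 0)%nat -> root_sum n m = 0%C.
Proof.
  intros Hm. set (z := (root_unity n ^ m)%C).
  assert (Hz : (1 - z)%C <> 0%C)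
    by (apply Cminus_eq_contra; intros E; now apply (root_unity_pow_neq_1 n m)).
  unfold root_sum. fold z.
  replace (sum_n _ n) with (/ (1 - z) * ((1 - z) * sum_n (fun j => z ^ j) n))%C
    by (field; exact Hz).
  rewrite Cmult_geometric_sum.
  unfold z. rewrite <- Cpow_mult_r, Nat.mul_comm, Cpow_mult_r, root_unity_pow_S, Cpow_1_l.
  ring.
Qed.

Lemma Cmod_root_sum_le (n m : nat) : Cmod (root_sum n m) <= INR (S n).
Proof.
  unfold root_sum. eapply Rle_trans; [apply (norm_sum_n_m (V := C_NormedModule))|].
  rewrite <- (Rmult_1_r (INR (S n))), <- sum_n_const. apply sum_n_m_le. intros j.
  change norm with Cmod.
  rewrite <- Cpow_mult_r, Cmod_root_unity_pow. lra.
Qed.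

(** * Caratheodory's inequality *)

Lemma exists_unit_rotation (v : C) : exists c, Cmod c = 1 /\ Re (c * v)%C = - Cmod v.
Proof.
  destruct (Req_dec (Cmod v) 0) as [E|E].
  - exists 1%C. split; [apply Cmod_1|].
    apply Cmod_eq_0 in E. subst v. rewrite Cmult_0_r, Cmod_0. simpl. lra.
  - pose proof (Cmod_ge_0 v).
    exists (- Cconj v / RtoC (Cmod v))%C. split.
    + rewrite Cmod_div, Cmod_opp, Cmod_conj, Cmod_R, Rabs_pos_eq
        by (auto; intros H'; injection H'; lra).
      field. exact E.
    + replace (- Cconj v / RtoC (Cmod v) * v)%C with (- (v * Cconj v) / RtoC (Cmod v))%C
        by (field; intros H'; injection H'; auto).
      rewrite <- Cmod2_conj, <- RtoC_opp, <- RtoC_div, re_RtoC by exact E. field. exact E.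
Qed.

Definition weighted_root_sum (n k : nat) (c : C) (m : nat) : C :=
  (root_sum n m + / 2 * (c * root_sum n (m + (S n - k)) + Cconj c * root_sum n (m + k)))%C.

Definition root_weight (n k : nat) (c : C) (j : nat) : R :=
  1 + Re (c * (root_unity n ^ (S n - k)) ^ j)%C.

(* [Re a * Re b = Re (b * (a + conj a) / 2)] turns the weight [Re (c w^(-k j))] into two
   further root sums; [w^(S n - k)] plays the role of [w^(-k)]. *)
Lemma weighted_root_average (n k : nat) (c v : C) (m : nat) : (k <= S n)%nat ->
  sum_n (fun j => root_weight n k c j * Re (v * (root_unity n ^ j) ^ m)%C) n
  = Re (v * weighted_root_sum n k c m)%C.
Proof.
  intros Hk. set (w := root_unity n). set (L := (S n - k)%nat).
  set (Y := fun j => ((w ^ m) ^ j)%C).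
  set (XY := fun j => ((w ^ (m + L)) ^ j)%C).
  set (XbY := fun j => ((w ^ (m + k)) ^ j)%C).
  assert (Hconj : Cconj (w ^ L)%C = (w ^ k)%C) by (apply Cconj_root_unity_pow; lia).
  rewrite (sum_n_ext _ (fun j => Re (v * (Y j + / 2 * (c * XY j + Cconj c * XbY j)))%C)).
  - assert (Hlin : forall p,
      (sum_n (fun j => v * (Y j + / 2 * (c * XY j + Cconj c * XbY j)))%C p : C)
      = (v * (sum_n Y p + / 2 * (c * sum_n XY p + Cconj c * sum_n XbY p)))%C).
    { induction p as [|p IH]; rewrite ?sum_O, ?sum_Sn; [reflexivity|].
      change plus with Cplus. rewrite IH. ring. }
    now rewrite sum_n_Re, Hlin.
  - intros j. unfold Y, XY, XbY.
    rewrite !Cpow_add_r, !Cpow_mult_l, <- Hconj, <- Cpow_conj.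
    replace ((w ^ j) ^ m)%C with ((w ^ m) ^ j)%C
      by (rewrite <- !Cpow_mult_r, Nat.mul_comm; reflexivity).
    unfold root_weight. fold w L.
    destruct ((w ^ L) ^ j)%C as [a1 a2], ((w ^ m) ^ j)%C as [b1 b2], c as [c1 c2],
      v as [v1 v2].
    unfold Re, Cconj, Cmult, Cplus, Cinv; simpl. field.
Qed.

Lemma Nat_mod_neq_0 (N x : nat) : (0 < x < 2 * N)%nat -> x <> N -> (x mod N <> 0)%nat.
Proof.
  intros H1 H2 H3. assert (E := Nat.div_mod_eq x N). rewrite H3 in E.
  destruct (x / N)%nat as [|[|q]]; lia.
Qed.

Lemma sum_f_R0_two_terms (t : nat -> R) (k p : nat) : (1 <= k <= p)%nat ->
  (forall m, (m <= p)%nat -> m <> 0%nat -> m <> k -> t m = 0) ->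
  sum_f_R0 t p = t 0%nat + t k.
Proof.
  induction p as [|p IH]; intros Hkp Ht; [lia|]. simpl.
  destruct (Nat.eq_dec k (S p)) as [->|Hk].
  - destruct p as [|p]; [reflexivity|].
    rewrite decomp_sum, sum_eq_R0 by (lia || (intros i Hi; apply Ht; lia)). simpl. ring.
  - rewrite IH, (Ht (S p)) by (lia || (intros; apply Ht; lia)). ring.
Qed.

Section WeightedRootSum.

Variables (n k : nat) (c : C).
Hypothesis (Hk : (1 <= k)%nat) (Hkn : (2 * k <= n)%nat).

Let root_sum_small (m : nat) : (0 < m < S n)%nat -> root_sum n m = 0%C.
Proof. intros Hm. apply root_sum_nonmultiple. rewrite Nat.mod_small; lia. Qed.

Lemma weighted_root_sum_0 : weighted_root_sum n k c 0 = RtoC (INR (S n)).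
Proof.
  unfold weighted_root_sum. rewrite root_sum_multiple by apply Nat.Div0.mod_0_l.
  rewrite !root_sum_small by lia. ring.
Qed.

Lemma weighted_root_sum_k : weighted_root_sum n k c k = (/ 2 * (c * RtoC (INR (S n))))%C.
Proof.
  unfold weighted_root_sum.
  rewrite (root_sum_multiple n (k + (S n - k))) by (replace (k + (S n - k))%nat with (S n)
    by lia; apply Nat.Div0.mod_same).
  rewrite !root_sum_small by lia. ring.
Qed.

Lemma weighted_root_sum_other (m : nat) :
  (0 < m < S n - k)%nat -> m <> k -> weighted_root_sum n k c m = 0%C.
Proof.
  intros Hm Hmk. unfold weighted_root_sum.
  rewrite (root_sum_nonmultiple n (m + (S n - k))) by (apply Nat_mod_neq_0; lia).
  rewrite !root_sum_small by lia. ring.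
Qed.

Lemma Cmod_weighted_root_sum_le (m : nat) :
  Cmod c = 1 -> Cmod (weighted_root_sum n k c m) <= 2 * INR (S n).
Proof.
  intros Hc. unfold weighted_root_sum.
  assert (H12 : Cmod (c * root_sum n (m + (S n - k)) + Cconj c * root_sum n (m + k))
                <= 2 * INR (S n)).
  { eapply Rle_trans; [apply Cmod_triangle|].
    rewrite !Cmod_mult, Cmod_conj, Hc, !Rmult_1_l.
    pose proof (Cmod_root_sum_le n (m + (S n - k))).
    pose proof (Cmod_root_sum_le n (m + k)). lra. }
  assert (Hhalf : Cmod (/ 2) = / 2)
    by (rewrite Cmod_inv, Cmod_R, Rabs_pos_eq by (try lra; intros E; injection E; lra);
        reflexivity).
  eapply Rle_trans; [apply Cmod_triangle|]. rewrite Cmod_mult, Hhalf.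
  pose proof (Cmod_root_sum_le n m). lra.
Qed.

Lemma root_weight_nonneg (j : nat) : Cmod c = 1 -> 0 <= root_weight n k c j.
Proof.
  intros Hc. pose proof (re_le_Cmod (c * (root_unity n ^ (S n - k)) ^ j)%C) as Hre.
  rewrite Cmod_mult, Hc, Cmod_pow, Cmod_root_unity_pow, pow1, Rmult_1_l in Hre.
  apply Rabs_le_between in Hre. unfold root_weight. lra.
Qed.

Lemma sum_root_weight : sum_n (root_weight n k c) n = INR (S n).
Proof.
  set (z := (root_unity n ^ (S n - k))%C).
  assert (Hsum : forall p, (sum_n (root_weight n k c) p : R)
                           = INR (S p) + Re (c * sum_n (fun j => z ^ j)%C p)%C).
  { unfold root_weight. fold z.
    induction p as [|p IH]; rewrite ?sum_O, ?sum_Sn; [simpl; ring|].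
    rewrite IH, (S_INR (S p)).
    change (@plus C_AbelianMonoid) with Cplus. change (@plus R_AbelianMonoid) with Rplus.
    rewrite Cmult_plus_distr_l, re_plus. ring. }
  rewrite Hsum. change (sum_n (fun j => z ^ j)%C n) with (root_sum n (S n - k)).
  rewrite root_sum_small, Cmult_0_r by lia.
  now rewrite re_RtoC, Rplus_0_r.
Qed.

Lemma weighted_root_series_le (V : nat -> C) (T : R) :
  Cmod c = 1 -> ex_series (fun m => Cmod (V m)) ->
  is_series (fun m => Re (V m * weighted_root_sum n k c m)%C) T ->
  T <= INR (S n) * (Re (V 0%nat) + Re (c * V k)%C / 2)
       + 2 * INR (S n) * Series (fun i => Cmod (V (S n - k + i)%nat)).
Proof.
  intros Hc HV HT. set (L := (S n - k)%nat). set (N := INR (S n)).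
  set (t := fun m => Re (V m * weighted_root_sum n k c m)%C).
  change (is_series t T) in HT.
  assert (Ht : ex_series t) by now exists T.
  assert (Htail : Rabs (Series (fun i => t (L + i)%nat))
                  <= 2 * N * Series (fun i => Cmod (V (L + i)%nat))).
  { apply (norm_series_le (V := R_NormedModule) (fun i => t (L + i)%nat)
             (fun i => 2 * N * Cmod (V (L + i)%nat))).
    - apply Series_correct, (ex_series_incr_n t L), Ht.
    - apply (is_series_scal_l (V := R_NormedModule)), Series_correct.
      exact (proj1 (ex_series_incr_n _ L) HV).
    - intros i. unfold t. eapply Rle_trans; [apply re_le_Cmod|].
      rewrite Cmod_mult, Rmult_comm. apply Rmult_le_compat_r; [apply Cmod_ge_0|].
      now apply Cmod_weighted_root_sum_le. }
  apply is_series_unique in HT. rewrite <- HT.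
  rewrite (Series_incr_n t L), (sum_f_R0_two_terms t k) by
    (lia || exact Ht || (intros m Hm Hm0 Hmk; unfold t;
      rewrite weighted_root_sum_other, Cmult_0_r by lia; apply re_RtoC)).
  unfold t at 1 2. rewrite weighted_root_sum_0, weighted_root_sum_k. fold N.
  replace (V k * (/ 2 * (c * RtoC N)))%C with (c * V k * RtoC (N / 2))%C
    by (rewrite RtoC_div by lra; field; intros E; injection E; lra).
  rewrite !re_scal_r. apply Rabs_le_between in Htail. lra.
Qed.

End WeightedRootSum.

Section Caratheodory.

Variables (V : nat -> C) (beta : R) (P : C -> R).
Hypothesis HV : ex_series (fun m => Cmod (V m)).
Hypothesis HP : forall u, Cmod u = 1 ->
  is_series (fun m => Re (V m * u ^ m)%C) (P u) /\ beta < P u.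

(* In the weighted average of [P] over the roots of unity, only the terms [m = 0] and
   [m = k] of the series survive below [S n - k]. *)
Lemma caratheodory_root_average (k n : nat) : (1 <= k)%nat -> (2 * k <= n)%nat ->
  Cmod (V k) <= 2 * (Re (V 0%nat) - beta)
                + 4 * Series (fun i => Cmod (V (S n - k + i)%nat)).
Proof.
  intros Hk Hkn.
  destruct (exists_unit_rotation (V k)) as [c [Hc1 Hc2]].
  set (w := root_unity n). set (N := INR (S n)).
  assert (HN : 0 < N) by apply lt_0_INR, Nat.lt_0_succ.
  set (T := sum_n (fun j => root_weight n k c j * P (w ^ j)%C) n).
  assert (HT : is_series (fun m => Re (V m * weighted_root_sum n k c m)%C) T).
  { eapply is_series_ext; [intros m; apply weighted_root_average; lia|].
    unfold T. apply (is_series_sum_n (V := R_NormedModule)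
      (fun j m => root_weight n k c j * Re (V m * (w ^ j) ^ m)%C)
      (fun j => root_weight n k c j * P (w ^ j)%C)).
    intros j _. apply (is_series_scal_l (V := R_NormedModule)), HP, Cmod_root_unity_pow. }
  assert (Hlow : beta * N <= T).
  { unfold T, N. rewrite <- (sum_root_weight n k c), Rmult_comm,
      <- (sum_n_mult_r (K := R_Ring)) by assumption.
    apply sum_n_m_le. intros j.
    apply Rmult_le_compat_l; [now apply root_weight_nonneg|].
    left. apply HP, Cmod_root_unity_pow. }
  assert (Hup := weighted_root_series_le n k c Hk Hkn V T Hc1 HV HT).
  rewrite Hc2 in Hup. fold N in Hup.
  apply (Rmult_le_reg_l (N / 2)); [lra|]. nra.
Qed.

Lemma caratheodory (k : nat) : (1 <= k)%nat -> Cmod (V k) <= 2 * (Re (V 0%nat) - beta).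
Proof.
  intros Hk. apply Rle_plus_epsilon. intros eps Heps.
  destruct (Series_tail_le _ (eps / 4) HV ltac:(lra)) as [n0 Hn0].
  eapply Rle_trans; [apply (caratheodory_root_average k (n0 + 2 * k)); lia|].
  specialize (Hn0 (S (n0 + 2 * k) - k)%nat ltac:(lia)). lra.
Qed.

End Caratheodory.

(** * The functional [J] as a power series *)

Lemma Cconj_mul_unit (u : C) : Cmod u = 1 -> (Cconj u * u)%C = 1%C.
Proof.
  intros Hu. rewrite Cmult_comm, <- Cmod2_conj, Hu. apply injective_projections; simpl; ring.
Qed.

Lemma is_derive_Re_ray (H : C -> C) (u : C) (t0 : R) (l : C) :
  Cmod u = 1 -> is_derive H (RtoC t0 * u)%C l ->
  is_derive (fun t : R => Re (Cconj u * H (RtoC t * u)%C)%C) t0 (Re l).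
Proof.
  intros Hu [_ HD]. split; [apply is_linear_scal_l|].
  intros x Hx.
  assert (Ex : t0 = x) by now apply (is_filter_lim_locally_unique (K := R_AbsRing)).
  subst x. intros eps.
  destruct (HD (RtoC t0 * u)%C (fun P HP => HP) eps) as [d Hd]. exists d. intros y Hy.
  change (Rabs (y - t0) < d) in Hy.
  assert (Hdist : Cmod (RtoC y * u - RtoC t0 * u)%C = Rabs (y - t0)).
  { replace (RtoC y * u - RtoC t0 * u)%C with (RtoC (y - t0) * u)%C
      by (rewrite RtoC_minus; ring).
    now rewrite Cmod_mult, Cmod_R, Hu, Rmult_1_r. }
  specialize (Hd (RtoC y * u)%C ltac:(change (Cmod (RtoC y * u - RtoC t0 * u)%C < d); lra)).
  change (Cmod (H (RtoC y * u) - H (RtoC t0 * u) - (RtoC y * u - RtoC t0 * u) * l)%C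
          <= eps * Cmod (RtoC y * u - RtoC t0 * u)%C) in Hd.
  rewrite Hdist in Hd.
  change (Rabs (Re (Cconj u * H (RtoC y * u))%C - Re (Cconj u * H (RtoC t0 * u))%C
                - (y - t0) * Re l) <= eps * Rabs (y - t0)).
  eapply Rle_trans; [|exact Hd].
  rewrite <- (Rmult_1_l (Cmod _)), <- Hu, <- Cmod_conj, <- Cmod_mult.
  eapply Rle_trans; [|apply re_le_Cmod]. right. f_equal.
  assert (Hlin : (Cconj u * ((RtoC y * u - RtoC t0 * u) * l))%C = (RtoC (y - t0) * l)%C).
  { rewrite RtoC_minus. transitivity ((RtoC y - RtoC t0) * (Cconj u * u) * l)%C; [ring|].
    rewrite Cconj_mul_unit by exact Hu. ring. }
  transitivity (Re (Cconj u * H (RtoC y * u) - Cconj u * H (RtoC t0 * u)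
                    - Cconj u * ((RtoC y * u - RtoC t0 * u) * l))%C).
  - rewrite Hlin. unfold Cminus. rewrite !re_plus, !re_opp, re_scal_l. ring.
  - f_equal. ring.
Qed.

Lemma analytic_CV_radius_gt (h : C -> C) (d : nat -> C) (a : nat -> R) (r : R) :
  analytic_U h d -> (forall m, Rabs (a m) <= Cmod (d m)) -> Rabs r < 1 ->
  Rbar_lt (Rabs r) (CV_radius a).
Proof.
  intros Ha Hb Hr. set (rho := (1 + Rabs r) / 2).
  apply Rbar_lt_le_trans with (Finite rho); [simpl; unfold rho; lra|].
  apply CV_radius_bounded.
  assert (Hc : Cmod (RtoC rho) < 1) by (rewrite Cmod_R, Rabs_pos_eq; unfold rho;
                                         pose proof (Rabs_pos r); lra).
  destruct (is_series_bounded _ _ (analytic_is_series _ _ _ Ha Hc)) as [M HM].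
  exists M. intros n. specialize (HM n).
  rewrite Cmod_mult, Cmod_pow, Cmod_R in HM.
  rewrite Rabs_mult, <- RPow_abs. eapply Rle_trans; [|exact HM].
  rewrite Rmult_comm. apply Rmult_le_compat_l; [apply pow_le, Rabs_pos | apply Hb].
Qed.

Lemma analytic_div_id_series (H : C -> C) (d : nat -> C) (z : C) :
  analytic_U H d -> d 0%nat = 0%C -> Cmod z < 1 -> z <> 0%C ->
  is_series (fun m => z ^ m * d (S m))%C (H z / z)%C.
Proof.
  intros Ha Hd0 Hz Hz0.
  assert (Hs := analytic_is_series _ _ _ Ha Hz).
  assert (Hs1 : is_series (fun m => z ^ S m * d (S m))%C (H z)).
  { apply (is_series_incr_1 (fun m => z ^ m * d m)%C).
    replace (plus (H z) _) with (H z) by (rewrite Hd0; change plus with Cplus; ring).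
    exact Hs. }
  apply (is_series_scal_l (V := C_NormedModule) (/ z)%C) in Hs1.
  replace (H z / z)%C with (scal (/ z)%C (H z)) by (cbn; unfold Cdiv; ring).
  eapply is_series_ext; [|exact Hs1]. intros m. cbn. field. exact Hz0.
Qed.

(* Along the ray [t u], [Re (conj u * H (t u))] is the real power series with coefficients
   [Re (conj u * d m * u^m)]; differentiating it termwise at [t = r] gives [Re (H' (r u))]. *)
Lemma analytic_derive_series (H H1 : C -> C) (d : nat -> C) (u : C) (r : R) :
  analytic_U H d -> (forall z, Cmod z < 1 -> is_derive H z (H1 z)) -> Cmod u = 1 ->
  0 <= r < 1 ->
  is_series (fun m => INR (S m) * r ^ m * Re (d (S m) * u ^ m)%C) (Re (H1 (RtoC r * u)%C)).
Proof.
  intros Ha HD Hu Hr.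
  set (al := fun m => Re (Cconj u * d m * u ^ m)%C).
  set (F := fun t : R => Re (Cconj u * H (RtoC t * u)%C)%C).
  assert (HF : forall t, Rabs t < 1 -> PSeries al t = F t).
  { intros t Ht. assert (Hc : Cmod (RtoC t * u)%C < 1)
      by (rewrite Cmod_mult, Cmod_R, Hu; lra).
    rewrite PSeries_eq. apply is_series_unique.
    eapply is_series_ext; [|exact (is_series_Re _ _ (is_series_scal_l (V := C_NormedModule)
                                     (Cconj u) _ _ (analytic_is_series _ _ _ Ha Hc)))].
    intros m. change (Re (Cconj u * ((RtoC t * u) ^ m * d m))%C = pow_n t m * al m).
    rewrite pow_n_pow, Cpow_mult_l, <- RtoC_pow. unfold al.
    rewrite <- re_scal_l. f_equal. ring. }
  assert (Hal : forall m, Rabs (al m) <= Cmod (d m)).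
  { intros m. unfold al. eapply Rle_trans; [apply re_le_Cmod|].
    rewrite !Cmod_mult, Cmod_conj, Cmod_pow, Hu, pow1. lra. }
  assert (Rad : Rbar_lt (Rabs r) (CV_radius al))
    by (apply (analytic_CV_radius_gt H d); auto; rewrite Rabs_pos_eq; lra).
  assert (D1 : is_derive F r (PSeries (PS_derive al) r)).
  { eapply is_derive_ext_loc; [|apply (is_derive_PSeries _ _ Rad)].
    assert (He : 0 < 1 - r) by lra. exists (mkposreal _ He). intros t Ht.
    change (Rabs (t - r) < 1 - r) in Ht. apply HF.
    apply Rabs_lt_between in Ht. apply Rabs_lt_between. lra. }
  assert (D2 : is_derive F r (Re (H1 (RtoC r * u)%C)))
    by (apply is_derive_Re_ray; [exact Hu | apply HD; rewrite Cmod_mult, Cmod_R, Hu,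
                                               Rabs_pos_eq; lra]).
  rewrite <- (is_derive_unique _ _ _ D2), (is_derive_unique _ _ _ D1), PSeries_eq.
  eapply is_series_ext; [|apply Series_correct, (ex_pseries_derive _ _ Rad)].
  intros m.
  change (pow_n r m * PS_derive al m = INR (S m) * r ^ m * Re (d (S m) * u ^ m)%C).
  rewrite pow_n_pow. unfold PS_derive, al.
  rewrite Cpow_S.
  replace (Cconj u * d (S m) * (u * u ^ m))%C with ((Cconj u * u) * (d (S m) * u ^ m))%C
    by ring.
  rewrite Cconj_mul_unit, Cmult_1_l by exact Hu. ring.
Qed.

Lemma J_series (lam r : R) (H H1 : C -> C) (d : nat -> C) (u : C) :
  analytic_U H d -> d 0%nat = 0%C -> (forall z, Cmod z < 1 -> is_derive H z (H1 z)) ->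
  Cmod u = 1 -> 0 < r < 1 ->
  is_series (fun m => Re (RtoC ((1 + lam * INR m) * r ^ m) * d (S m) * u ^ m)%C)
    ((1 - lam) * Re (H (RtoC r * u) / (RtoC r * u))%C + lam * Re (H1 (RtoC r * u)%C)).
Proof.
  intros Ha Hd0 HD Hu Hr.
  assert (Hz : Cmod (RtoC r * u)%C = r) by (rewrite Cmod_mult, Cmod_R, Hu, Rabs_pos_eq; lra).
  assert (Hz0 : (RtoC r * u)%C <> 0%C) by (intros E; rewrite E, Cmod_0 in Hz; lra).
  assert (S1 := is_series_Re _ _ (analytic_div_id_series H d _ Ha Hd0 ltac:(rewrite Hz; lra) Hz0)).
  assert (S2 := analytic_derive_series H H1 d u r Ha HD Hu ltac:(lra)).
  apply (is_series_scal_l (V := R_NormedModule) (1 - lam)) in S1.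
  apply (is_series_scal_l (V := R_NormedModule) lam) in S2.
  eapply is_series_ext; [|exact (is_series_plus (V := R_NormedModule) _ _ _ _ S1 S2)].
  intros m.
  change ((1 - lam) * Re ((RtoC r * u) ^ m * d (S m))%C
          + lam * (INR (S m) * r ^ m * Re (d (S m) * u ^ m)%C)
          = Re (RtoC ((1 + lam * INR m) * r ^ m) * d (S m) * u ^ m)%C).
  rewrite Cpow_mult_l, <- RtoC_pow, <- !Cmult_assoc, !re_scal_l, S_INR.
  replace (u ^ m * d (S m))%C with (d (S m) * u ^ m)%C by ring. ring.
Qed.

Lemma analytic_ex_series_derive (h : C -> C) (d : nat -> C) (r : R) :
  analytic_U h d -> 0 <= r < 1 ->
  ex_series (fun m => INR (S m) * r ^ m * Cmod (d (S m))).
Proof.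
  intros Ha Hr. set (b := fun m => Cmod (d m)).
  assert (Rad : Rbar_lt (Rabs r) (CV_radius (PS_derive b))).
  { rewrite CV_radius_derive. apply (analytic_CV_radius_gt h d); [exact Ha| |].
    - intros m. unfold b. rewrite Rabs_pos_eq; [lra | apply Cmod_ge_0].
    - rewrite Rabs_pos_eq; lra. }
  eapply ex_series_ext; [|exact (CV_disk_inside _ _ Rad)].
  intros m.
  change (Rabs (INR (S m) * Cmod (d (S m)) * r ^ m) = INR (S m) * r ^ m * Cmod (d (S m))).
  rewrite Rabs_pos_eq; [ring|].
  apply Rmult_le_pos; [apply Rmult_le_pos; [apply pos_INR | apply Cmod_ge_0]|].
  apply pow_le. lra.
Qed.

(** * Coefficient bounds for the class *)

Lemma pow_ge_1_sub (r : R) (k : nat) : 0 <= r <= 1 -> 1 - INR k * (1 - r) <= r ^ k.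
Proof.
  intros Hr. induction k as [|k IH]; [simpl; lra|].
  rewrite S_INR. simpl.
  assert (r * (1 - INR k * (1 - r)) <= r * r ^ k) by (apply Rmult_le_compat_l; lra).
  assert (0 <= INR k * ((1 - r) * (1 - r))) by (apply Rmult_le_pos; [apply pos_INR | nra]).
  nra.
Qed.

Lemma le_of_forall_pow_le (X Y : R) (k : nat) :
  (forall r, 0 < r < 1 -> X * r ^ k <= Y) -> X <= Y.
Proof.
  intros H. destruct (Rle_or_lt X 0) as [HX|HX].
  - specialize (H (1/2) ltac:(lra)).
    assert (Hp : (1/2) ^ k <= 1 ^ k) by (apply pow_incr; lra). rewrite pow1 in Hp.
    set (p := (1/2) ^ k) in *. nra.
  - apply Rle_plus_epsilon. intros eps Heps. pose proof (pos_INR k).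
    set (delta := Rmin (1/2) (eps / (X * INR k + 1))).
    assert (Hd : 0 < delta)
      by (apply Rmin_pos; [lra | apply Rdiv_lt_0_compat; [lra | nra]]).
    assert (Hd1 : delta <= 1/2) by apply Rmin_l.
    assert (Hd2 : delta * (X * INR k + 1) <= eps).
    { apply (Rmult_le_reg_r (/ (X * INR k + 1))); [apply Rinv_0_lt_compat; nra|].
      replace (eps * / (X * INR k + 1)) with (eps / (X * INR k + 1)) by reflexivity.
      replace (delta * (X * INR k + 1) * / (X * INR k + 1)) with delta by (field; nra).
      apply Rmin_r. }
    specialize (H (1 - delta) ltac:(lra)).
    pose proof (pow_ge_1_sub (1 - delta) k ltac:(lra)). nra.
Qed.

Lemma rusch_coef_0 (c : nat -> C) (k : nat) : rusch_coef 0 c (S (S k)) = c (S (S k)).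
Proof.
  unfold rusch_coef. rewrite Nat.add_0_l.
  replace (INR (fact (S k)) / (INR (fact (S k)) * INR (fact 0))) with 1
    by (change (INR (fact 0)) with 1; field; apply INR_fact_neq_0).
  apply Cmult_1_l.
Qed.

Lemma J_val_Re (lam : R) (H H1 H2 : C -> C) (z : C) : z <> 0%C ->
  Re (J_val 1%C lam 0 H H1 H2 z) = (1 - lam) * Re (H z / z)%C + lam * Re (H1 z).
Proof.
  intros Hz. unfold J_val, quot_z. destruct (Ceq_dec z 0%C) as [E|_]; [contradiction|].
  destruct (H z / z)%C, (H1 z), (H2 z), z. simpl. field.
Qed.

Section JCondition.

Variables (lam beta : R) (c : nat -> C) (H H1 H2 : C -> C).
Hypothesis Hlam : 0 <= lam.
Hypothesis HH : analytic_U H (rusch_coef 0 c).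
Hypothesis HD : forall z, Cmod z < 1 -> is_derive H z (H1 z).
Hypothesis HJ : forall z, Cmod z < 1 -> Re (J_val 1%C lam 0 H H1 H2 z) > beta.

Lemma J_coef_bound_on_circle (k : nat) (r : R) : (1 <= k)%nat -> 0 < r < 1 ->
  (1 + lam * INR k) * r ^ k * Cmod (c (S k)) <= 2 * (1 - beta).
Proof.
  intros Hk Hr. set (d := rusch_coef 0 c).
  set (V := fun m => (RtoC ((1 + lam * INR m) * r ^ m) * d (S m))%C).
  set (P := fun u => (1 - lam) * Re (H (RtoC r * u) / (RtoC r * u))%C
                     + lam * Re (H1 (RtoC r * u)%C)).
  assert (HV : ex_series (fun m => Cmod (V m))).
  { apply (ex_series_le (V := R_CompleteNormedModule) _
             (fun m => (1 + lam) * (INR (S m) * r ^ m * Cmod (d (S m))))).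
    - intros m. change (Rabs (Cmod (V m)) <= (1 + lam) * (INR (S m) * r ^ m * Cmod (d (S m)))).
      unfold V. rewrite Rabs_pos_eq, Cmod_mult, Cmod_R, Rabs_pos_eq by
        (apply Cmod_ge_0 || (apply Rmult_le_pos; [pose proof (pos_INR m); nra
                                                  | apply pow_le; lra])).
      rewrite S_INR. pose proof (pos_INR m).
      assert (0 <= r ^ m * Cmod (d (S m)))
        by (apply Rmult_le_pos; [apply pow_le; lra | apply Cmod_ge_0]).
      rewrite Rmult_assoc, (Rmult_assoc (INR m + 1)), <- (Rmult_assoc (1 + lam)).
      apply Rmult_le_compat_r; [assumption | nra].
    - apply (ex_series_scal_l (V := R_NormedModule)), (analytic_ex_series_derive H d r HH).
      lra. }
  replace (c (S k)) with (d (S k)) by (destruct k as [|k]; [lia | apply rusch_coef_0]).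
  replace (2 * (1 - beta)) with (2 * (Re (V 0%nat) - beta))
    by (unfold V, d; simpl; f_equal; f_equal; ring).
  rewrite <- (Rabs_pos_eq ((1 + lam * INR k) * r ^ k)), <- Cmod_R, <- Cmod_mult
    by (apply Rmult_le_pos; [pose proof (pos_INR k); nra | apply pow_le; lra]).
  apply (caratheodory V beta P HV); [|exact Hk]. intros u Hu. split.
  - apply J_series; [exact HH | reflexivity | exact HD | exact Hu | exact Hr].
  - assert (Hz : Cmod (RtoC r * u)%C < 1) by (rewrite Cmod_mult, Cmod_R, Hu, Rabs_pos_eq; lra).
    specialize (HJ _ Hz). rewrite J_val_Re in HJ; [unfold P; lra|].
    intros E. apply (f_equal Cmod) in E. rewrite Cmod_mult, Cmod_R, Hu, Cmod_0 in E.
    rewrite Rabs_pos_eq in E; lra.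
Qed.

Lemma J_coef_bound (k : nat) : (1 <= k)%nat ->
  (1 + lam * INR k) * Cmod (c (S k)) <= 2 * (1 - beta).
Proof.
  intros Hk. apply (le_of_forall_pow_le _ _ k). intros r Hr.
  rewrite Rmult_assoc, (Rmult_comm (Cmod _)), <- Rmult_assoc.
  now apply J_coef_bound_on_circle.
Qed.

End JCondition.

Lemma J_cond_coef_bound (lam beta : R) (h : C -> C) : 0 <= lam ->
  J_cond 1%C lam 0 0%nat beta h ->
  exists c, analytic_U h c /\
    forall k, (1 <= k)%nat -> (1 + lam * INR k) * Cmod (c (S k)) <= 2 * (1 - beta).
Proof.
  intros Hlam [c [H [H1 [H2 [Hh [HH [HD [_ HJ]]]]]]]].
  exists c. split; [exact Hh|]. exact (J_coef_bound lam beta c H H1 H2 Hlam HH HD HJ).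
Qed.

Theorem corollary8 (lam beta : R) (f : C -> C) (a : nat -> C) :
  0 <= lam -> 0 <= beta < 1 ->
  in_Theta 1%C lam 0 0%nat beta f a ->
  Cmod (a 2%nat) <= Rmin (2 * (1 - beta) / (1 + lam))
                         (sqrt (2 * (1 - beta) / (1 + 2 * lam))) /\
  Cmod (a 3%nat) <= 2 * (1 - beta) / (1 + 2 * lam).
Proof.
  intros Hlam _ [g [[Hf [Ha0 [Ha1 [_ [_ [_ Hinv]]]]]] [Jf Jg]]].
  destruct (J_cond_coef_bound lam beta f Hlam Jf) as [cf [Hcf Bf]].
  destruct (J_cond_coef_bound lam beta g Hlam Jg) as [cg [Hcg Bg]].
  destruct (inverse_coef23 f g a cg Hf Ha0 Ha1 Hcg Hinv) as [_ Hg3].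
  assert (B2 := Bf 1%nat ltac:(lia)). assert (B3 := Bf 2%nat ltac:(lia)).
  assert (B3g := Bg 2%nat ltac:(lia)).
  rewrite <- (analytic_coef_unique f a cf Hf Hcf) in B2, B3 by lia.
  rewrite Hg3 in B3g. change (INR 1) with 1 in B2. replace (INR 2) with 2 in * by reflexivity.
  assert (Ha2 : (1 + 2 * lam) * (2 * Cmod (a 2%nat) ^ 2) <= 4 * (1 - beta)).
  { assert (E : Cmod (2 * a 2%nat * a 2%nat)%C = 2 * Cmod (a 2%nat) ^ 2)
      by (rewrite !Cmod_mult, Cmod_R, Rabs_pos_eq by lra; ring).
    pose proof (Cmod_triangle (a 3%nat) (2 * a 2%nat * a 2%nat - a 3%nat)%C) as Htri.
    replace (a 3%nat + (2 * a 2%nat * a 2%nat - a 3%nat))%C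
      with (2 * a 2%nat * a 2%nat)%C in Htri by ring.
    rewrite <- E. eapply Rle_trans; [apply Rmult_le_compat_l; [lra | exact Htri]|]. lra. }
  repeat split; [apply Rmin_glb| ]; [| |apply Rle_div_r; lra].
  - apply Rle_div_r; lra.
  - rewrite <- (sqrt_pow2 (Cmod (a 2%nat))) by apply Cmod_ge_0.
    apply sqrt_le_1_alt. rewrite <- Rle_div_r by lra. nra.
Qed.
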